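(* Assume $N>1$. Then the operator $L$ satisfies the trace condition: for any $\zeta$ in the domain of $L^*$ such that the eigenvalues of the symmetric matrix $-L^*\zeta(x)$ are bounded above by a constant $k$ for a.e. $x\in\Omega$, the eigenvalues of $L^*\zeta(x)$ are bounded above for a.e. $x\in\Omega$ by a constant depending only on $k$ (and not on $\zeta$ or $x$).
   Context: Fix integers $N\ge1$, $p\ge1$, $n=pN^2$, $\Omega=\mathbb T^{N\times p}$ with coordinates $x_{jl}$. Indices of $\mathbb R^n$ are triples $(i,j,k)$, $i,j\in\{1,\dots,N\}$, $k\in\{1,\dots,p\}$; elements of the space $\mathbb R^{n\times n}_s$ of symmetric matrices are arrays $A_{ijk,hqr}$, with Frobenius inner product. The linear map $\mathfrak U:\mathbb R^{n\times n}_s\to\mathbb R^N$ is $(\mathfrak U A)_i=\frac12\sum_{l=1}^p\big[A_{iil,iil}+\sum_{j\ne i}(A_{jjl,ijl}+A_{ijl,jjl})\big]$, with adjoint $\mathfrak U^*:\mathbb R^N\to\mathbb R^{n\times n}_s$. For $w:\Omega\to\mathbb R^{n\times n}_s$, $Lw=-\nabla(\mathfrak U w)$ ($\mathbb R^n$-valued with components $-\partial_{x_{jk}}(\mathfrak Uw)_i$), and $L^*=\mathfrak U^*\operatorname{div}$ is its $L^2(\Omega)$-adjoint, acting on $\mathbb R^n$-valued functions $\zeta$. *)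

From HB Require Import structures.
From mathcomp Require Import all_boot all_order all_algebra.
From mathcomp Require Import all_classical all_reals.
From mathcomp Require Import topology normedtype.
Set Implicit Arguments. Unset Strict Implicit. Unset Printing Implicit Defensive.
Import Order.TTheory GRing.Theory Num.Theory.
Local Open Scope classical_set_scope.
Local Open Scope ring_scope.

Section Defs.
Variables (R : realType) (N p : nat).

Definition idx := ('I_N * 'I_N * 'I_p)%type.
Definition dimn := #|{: idx}|.

Definition ent (A : 'M[R]_dimn) (a b : idx) : R := A (enum_rank a) (enum_rank b).

Definition Umap (A : 'M[R]_dimn) : 'rV[R]_N :=
  \row_i (2^-1 * \sum_(l < p) (ent A (i, i, l) (i, i, l) +
     \sum_(j < N | j != i) (ent A (j, j, l) (i, j, l) + ent A (i, j, l) (j, j, l)))).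

Definition dotN (u v : 'rV[R]_N) : R := \sum_(i < N) u 0 i * v 0 i.

Definition Esym (a b : 'I_dimn) : 'M[R]_dimn := 2^-1 *: (delta_mx a b + delta_mx b a).

(* Adjoint of Umap w.r.t. the Frobenius inner product on symmetric matrices:
   for symmetric A, <U A, v> = sum_{a,b} A_ab (Ustar v)_ab, and Ustar v is symmetric. *)
Definition Ustar (v : 'rV[R]_N) : 'M[R]_dimn :=
  \matrix_(a, b) dotN (Umap (Esym a b)) v.

(* Points of Omega = T^{N x p} are represented by points x of R^{N x p}
   (coordinates x j l); functions on Omega are functions on R^{N x p}
   considered on the fundamental cell [0,1)^{N x p}. *)
Definition box_vol (a b : 'M[R]_(N, p)) : R :=
  \prod_(j < N) \prod_(l < p) Num.max 0 (b j l - a j l).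
Definition box (a b : 'M[R]_(N, p)) : set 'M[R]_(N, p) :=
  [set x | forall j l, a j l <= x j l <= b j l].

Definition lebesgue_null (E : set 'M[R]_(N, p)) : Prop :=
  forall eps : R, 0 < eps -> exists a b : nat -> 'M[R]_(N, p),
    E `<=` \bigcup_k box (a k) (b k) /\
    forall K : nat, \sum_(k < K) box_vol (a k) (b k) <= eps.

Definition ae_Omega (P : 'M[R]_(N, p) -> Prop) : Prop :=
  lebesgue_null [set x : 'M[R]_(N, p) | (forall j l, 0 <= x j l < 1) /\ ~ P x].

(* L^* zeta = Ustar (div zeta); here applied to the R^N-valued divergence g. *)
Definition Lstar_of_div (g : 'M[R]_(N, p) -> 'rV[R]_N) (x : 'M[R]_(N, p)) : 'M[R]_dimn :=
  Ustar (g x).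

Definition eig_le (A : 'M[R]_dimn) (c : R) : Prop :=
  forall a : R, eigenvalue A a -> a <= c.

End Defs.

From HB Require Import structures.
From mathcomp Require Import all_boot all_order all_algebra.
From mathcomp Require Import all_classical all_reals.
From mathcomp Require Import topology normedtype.
From mathcomp Require Import ring lra.
Import Order.TTheory GRing.Theory Num.Theory.
Local Open Scope ring_scope.
Set Implicit Arguments. Unset Strict Implicit. Unset Printing Implicit Defensive.

(* For fixed (j, l), the coordinates (i, j, l), i = 1..N, span an invariant
   subspace on which U* v acts as an arrow matrix: v_j/2 at the tip (j, j, l),
   v_i/2 in the rest of the tip's row and column, 0 elsewhere.  If mu <= v_j
   solves mu^2 = v_j mu + sum_(i != j) v_i^2, the vector with tip mu and entries
   v_i off the tip is an eigenvector for mu/2.  So when the eigenvalues of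
   -U* v are at most K >= 0, we get -mu <= 2K and therefore
   v_i^2 <= mu (mu - v_j) <= 4K^2 + 2K v_j  for every i != j.
   Since N > 1, applying this to a pair of distinct indices gives |v_i| <= 5K,
   and the eigenvalues of U* v are bounded by its entries, which are linear in
   v. *)

Lemma quadratic_root_le (R : rcfType) (b c : R) : 0 <= c ->
  exists2 mu : R, mu <= b & mu ^+ 2 = b * mu + c.
Proof.
move=> c0; have d0 : 0 <= b ^+ 2 + 4 * c by rewrite addr_ge0 ?sqr_ge0 ?mulr_ge0.
set s := Num.sqrt (b ^+ 2 + 4 * c).
have s2 : s ^+ 2 = b ^+ 2 + 4 * c by rewrite sqr_sqrtr.
have bs : - s <= b.
  have : `|b| <= s by rewrite -sqrtr_sqr ler_wsqrtr // lerDl mulr_ge0.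
  by rewrite ler_norml => /andP[].
exists ((b - s) / 2); first lra.
apply/eqP; rewrite -subr_eq0.
have -> : ((b - s) / 2) ^+ 2 - (b * ((b - s) / 2) + c) = (s ^+ 2 - (b ^+ 2 + 4 * c)) / 4.
  by field.
by rewrite s2 subrr mul0r.
Qed.

Lemma norm_le_of_sqr_le (R : realFieldType) (K x y : R) : 0 <= K ->
  x ^+ 2 <= 4 * K ^+ 2 + 2 * K * y -> y ^+ 2 <= 4 * K ^+ 2 + 2 * K * x ->
  `|x| <= 5 * K.
Proof.
move=> K0 hx hy.
have h : (x - K) ^+ 2 <= 10 * K ^+ 2 by have := sqr_ge0 (y - K); nra.
by rewrite ler_norml; apply/andP; split; nra.
Qed.

Lemma eigenvalueN (F : fieldType) n (A : 'M[F]_n) a :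
  eigenvalue A a -> eigenvalue (- A) (- a).
Proof.
move=> /eigenvalueP[x xA x0]; apply/eigenvalueP; exists x => //.
by rewrite mulmxN xA scaleNr.
Qed.

Lemma eigenvalue_norm_le (R : realFieldType) n (A : 'M[R]_n) a :
  eigenvalue A a -> `|a| <= \sum_b \sum_c `|A b c|.
Proof.
move=> /eigenvalueP[w wA w0].
have /existsP[b0 wb0] : [exists b, w 0 b != 0].
  apply: contraR w0 => /existsPn w0.
  by apply/eqP/rowP => b; rewrite mxE; apply/eqP/negPn.
have [m _ wm_max] := @arg_maxP _ R _ b0 xpredT (fun b => `|w 0 b|) isT.
have wm0 : 0 < `|w 0 m| by apply: lt_le_trans (wm_max b0 isT); rewrite normr_gt0.
have col_m : `|a| <= \sum_b `|A b m|.
  rewrite -(ler_pM2r wm0) mulr_suml -normrM.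
  have -> : a * w 0 m = \sum_b w 0 b * A b m.
    by move/rowP: wA => /(_ m); rewrite !mxE => <-.
  apply: le_trans (ler_norm_sum _ _ _) _; apply: ler_sum => b _.
  by rewrite normrM mulrC ler_wpM2l //; apply: wm_max.
apply: le_trans col_m _; rewrite exchange_big /= [leRHS](bigD1 m) //= lerDl.
by rewrite sumr_ge0 // => c _; rewrite sumr_ge0.
Qed.

Lemma lebesgue_null_subset (R : realType) N p (A B : set 'M[R]_(N, p)) :
  (A `<=` B)%classic -> lebesgue_null B -> lebesgue_null A.
Proof.
move=> AB nullB eps eps0; have [a [b [Bab sum_vol]]] := nullB eps eps0.
by exists a, b; split => // x /AB /Bab.
Qed.

Lemma ae_Omega_mono (R : realType) N p (P Q : 'M[R]_(N, p) -> Prop) :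
  (forall x, P x -> Q x) -> ae_Omega P -> ae_Omega Q.
Proof.
move=> PQ; apply: lebesgue_null_subset => x [x01 notQ].
by split=> // /PQ.
Qed.

Lemma sum_mul_eq_and (R : pzSemiRingType) (T : finType) (F : T -> R) c b :
  \sum_a F a * ((c == a) && b)%:R = F c * b%:R.
Proof.
rewrite (bigD1 c) //= eqxx big1 ?addr0 // => a.
by rewrite eq_sym => /negbTE ->; rewrite mulr0.
Qed.

Section Ustar.
Variables (R : realType) (N p : nat).
Local Notation n := (dimn N p).
Local Notation r := (@enum_rank (idx N p)).
Local Notation E := (@Esym R N p).

Lemma Umap_is_linear : linear (@Umap R N p).
Proof.
move=> a A B; apply/rowP => i; rewrite !mxE /ent.
rewrite mulrCA -mulrDr; congr (_ * _); rewrite mulr_sumr -big_split /=.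
apply: eq_bigr => l _; rewrite !mxE mulrDr addrACA mulr_sumr -big_split /=.
by congr (_ + _); apply: eq_bigr => j _; rewrite !mxE; ring.
Qed.

HB.instance Definition _ :=
  GRing.isLinear.Build R _ _ _ (@Umap R N p) Umap_is_linear.

Lemma dotN_sumZl (I : finType) (c : I -> R) (u : I -> 'rV[R]_N) v :
  dotN (\sum_a c a *: u a) v = \sum_a c a * dotN (u a) v.
Proof.
rewrite /dotN; under eq_bigr do rewrite summxE mulr_suml.
rewrite exchange_big; apply: eq_bigr => a _; rewrite mulr_sumr.
by apply: eq_bigr => i _; rewrite mxE mulrA.
Qed.

Lemma Ustar_mulmx (x : 'rV[R]_n) v b :
  (x *m Ustar p v) 0 b = dotN (Umap (\sum_a x 0 a *: E a b)) v.
Proof.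
rewrite linear_sum; under [in RHS]eq_bigr do rewrite linearZ.
by rewrite dotN_sumZl mxE; apply: eq_bigr => a _; rewrite mxE.
Qed.

Lemma sum_Esym_entry (x : 'rV[R]_n) b c d :
  (\sum_a x 0 a *: E a b) c d
    = 2^-1 * (x 0 c * (d == b)%:R + x 0 d * (c == b)%:R).
Proof.
rewrite summxE; under eq_bigr do rewrite !mxE mulrCA mulrDr.
rewrite -mulr_sumr big_split /= sum_mul_eq_and.
by under eq_bigr do rewrite andbC; rewrite sum_mul_eq_and.
Qed.

Lemma Umap_sum_Esym_raw (x : 'rV[R]_n) beta i :
  let X g := x 0 (r g) in
  Umap (\sum_a x 0 a *: E a (r beta)) 0 i = 2^-1 * \sum_(l < p)
    (X (i, i, l) * ((i, i, l) == beta)%:R + \sum_(j < N | j != i)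
      (X (j, j, l) * ((i, j, l) == beta)%:R + X (i, j, l) * ((j, j, l) == beta)%:R)).
Proof.
move=> X; rewrite mxE /X; congr (_ * _); apply: eq_bigr => l _.
rewrite /ent !sum_Esym_entry !(inj_eq enum_rank_inj); congr (_ + _); first by field.
by apply: eq_bigr => j _; rewrite !sum_Esym_entry !(inj_eq enum_rank_inj); field.
Qed.

Lemma Umap_sum_Esym (x : 'rV[R]_n) i0 j0 l0 i :
  Umap (\sum_a x 0 a *: E a (r (i0, j0, l0))) 0 i
    = 2^-1 * (if i0 == j0 then x 0 (r (i, j0, l0))
              else (i == i0)%:R * x 0 (r (j0, j0, l0))).
Proof.
rewrite Umap_sum_Esym_raw; congr (_ * _).
rewrite (bigD1 l0) //= [X in _ + X]big1 ?addr0 => [|l /negbTE ll0]; last first.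
  rewrite xpair_eqE ll0 andbF mulr0 add0r big1 // => j _.
  by rewrite !xpair_eqE ll0 !andbF !mulr0 addr0.
rewrite !xpair_eqE eqxx andbT; case: (eqVneq i0 j0) => [<- | i0j0].
  case: (eqVneq i i0) => [-> | ii0].
    rewrite /= mulr1 big1 ?addr0 // => j /negbTE ji0.
    by rewrite !xpair_eqE ji0 !andbF !mulr0 addr0.
  rewrite /= mulr0 add0r (bigD1 i0) /=; last by rewrite eq_sym.
  rewrite big1 ?addr0 => [|j /andP[_ /negbTE ji0]].
    by rewrite !xpair_eqE (negbTE ii0) !eqxx /= mulr0 mulr1 add0r.
  by rewrite !xpair_eqE ji0 andbF /= !mulr0 addr0.
have not_both y : (y == i0) && (y == j0) = false.
  by apply/negbTE; apply: contra i0j0 => /andP[/eqP <- /eqP <-].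
rewrite not_both mulr0 add0r; case: (eqVneq i i0) => [-> | ii0]; last first.
  rewrite mul0r big1 // => j _.
  by rewrite !xpair_eqE (negbTE ii0) not_both /= !mulr0 addr0.
rewrite (bigD1 j0) /=; last by rewrite eq_sym.
rewrite big1 ?addr0 => [|j /andP[_ /negbTE jj0]].
  by rewrite eqxx !xpair_eqE not_both /= mulr0 addr0 mulr1 mul1r.
by rewrite !xpair_eqE jj0 !andbF /= !mulr0 addr0.
Qed.

Lemma Ustar_mulmx_arrow (x : 'rV[R]_n) v i0 j0 l0 :
  (x *m Ustar p v) 0 (r (i0, j0, l0)) = 2^-1 *
    (if i0 == j0 then \sum_i v 0 i * x 0 (r (i, j0, l0))
     else v 0 i0 * x 0 (r (j0, j0, l0))).
Proof.
rewrite Ustar_mulmx /dotN; under eq_bigr do rewrite Umap_sum_Esym -mulrA.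
rewrite -mulr_sumr; congr (_ * _); case: eqVneq => _.
  by apply: eq_bigr => i _; rewrite mulrC.
rewrite (bigD1 i0) //= eqxx mul1r mulrC big1 ?addr0 // => i /negbTE ->.
by rewrite !mul0r.
Qed.

Definition arrow_eigvec (v : 'rV[R]_N) (j : 'I_N) (l : 'I_p) (mu : R) : 'rV[R]_n :=
  \row_b let: (i, j', l') := enum_val b in
    ((j' == j) && (l' == l))%:R * (if i == j then mu else v 0 i).

Lemma arrow_eigvecP (v : 'rV[R]_N) (j : 'I_N) (l : 'I_p) (mu : R) :
  mu ^+ 2 = v 0 j * mu + \sum_(i | i != j) v 0 i ^+ 2 ->
  arrow_eigvec v j l mu *m Ustar p v = (mu / 2) *: arrow_eigvec v j l mu.
Proof.
move=> quad; set x := arrow_eigvec v j l mu.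
have x_on i : x 0 (r (i, j, l)) = if i == j then mu else v 0 i.
  by rewrite mxE enum_rankK /= !eqxx mul1r.
have x_off i j' l' : ~~ ((j' == j) && (l' == l)) -> x 0 (r (i, j', l')) = 0.
  by rewrite mxE enum_rankK /= => /negbTE ->; rewrite mul0r.
apply/rowP => b; rewrite -(enum_valK b) [in RHS]mxE; case: (enum_val b) => [[i0 j0] l0].
rewrite Ustar_mulmx_arrow.
have [/andP[/eqP -> /eqP ->] | off] := boolP ((j0 == j) && (l0 == l)); last first.
  rewrite (x_off i0) // mulr0; case: eqP => _; last by rewrite x_off // !mulr0.
  by rewrite big1 ?mulr0 // => i _; rewrite x_off // mulr0.
rewrite !x_on eqxx; case: (eqVneq i0 j) => _; last by ring.
under eq_bigr do rewrite x_on.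
rewrite (bigD1 j) //= eqxx.
under eq_bigr => i ij do rewrite (negbTE ij) -expr2.
by rewrite -quad; field.
Qed.

Lemma eigenvalue_Ustar_arrow (v : 'rV[R]_N) (j : 'I_N) (l : 'I_p) (mu : R) :
  mu != 0 -> mu ^+ 2 = v 0 j * mu + \sum_(i | i != j) v 0 i ^+ 2 ->
  eigenvalue (Ustar p v) (mu / 2).
Proof.
move=> mu0 quad; apply/eigenvalueP; exists (arrow_eigvec v j l mu).
  exact: arrow_eigvecP.
apply: contra_neq mu0 => /rowP/(_ (r (j, j, l))).
by rewrite !mxE enum_rankK /= !eqxx mul1r.
Qed.

Lemma Ustar_coord_sqr_le (v : 'rV[R]_N) (K : R) (i j : 'I_N) :
  (0 < p)%N -> 0 <= K -> eig_le (- Ustar p v) K -> i != j ->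
  v 0 i ^+ 2 <= 4 * K ^+ 2 + 2 * K * v 0 j.
Proof.
move=> p_gt0 K0 hK ij.
set S := \sum_(i | i != j) v 0 i ^+ 2.
have S0 : 0 <= S by rewrite sumr_ge0 // => *; rewrite sqr_ge0.
have viS : v 0 i ^+ 2 <= S.
  by rewrite /S (bigD1 i) //= lerDl sumr_ge0 // => *; rewrite sqr_ge0.
have [mu mu_le quad] := quadratic_root_le (v 0 j) S0.
have muK : - (mu / 2) <= K.
  have [-> | mu_neq0] := eqVneq mu 0; first by rewrite mul0r oppr0.
  exact/hK/eigenvalueN/(eigenvalue_Ustar_arrow (Ordinal p_gt0) mu_neq0 quad).
nra.
Qed.

Lemma Ustar_coord_bounded (v : 'rV[R]_N) (K : R) :
  (1 < N)%N -> (0 < p)%N -> 0 <= K -> eig_le (- Ustar p v) K ->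
  forall i, `|v 0 i| <= 5 * K.
Proof.
move=> N_gt1 p_gt0 K0 hK i.
have [j ij] : exists j : 'I_N, i != j.
  pose j0 : 'I_N := Ordinal (ltnW N_gt1); pose j1 : 'I_N := Ordinal N_gt1.
  by case: (eqVneq i j0) => [-> | ?]; [exists j1 | exists j0].
have ji : j != i by rewrite eq_sym.
exact: norm_le_of_sqr_le K0 (Ustar_coord_sqr_le p_gt0 K0 hK ij) (Ustar_coord_sqr_le p_gt0 K0 hK ji).
Qed.

Definition Ustar_l1norm : R := \sum_b \sum_c \sum_i `|Umap (E b c) 0 i|.

Lemma Ustar_entry_le (v : 'rV[R]_N) (V : R) b c :
  (forall i, `|v 0 i| <= V) -> `|Ustar p v b c| <= V * \sum_i `|Umap (E b c) 0 i|.
Proof.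
move=> hv; rewrite mxE /dotN mulr_sumr; apply: le_trans (ler_norm_sum _ _ _) _.
by apply: ler_sum => i _; rewrite normrM mulrC ler_wpM2r.
Qed.

Lemma eig_le_Ustar (v : 'rV[R]_N) (V : R) :
  (forall i, `|v 0 i| <= V) -> eig_le (Ustar p v) (V * Ustar_l1norm).
Proof.
move=> hv a /eigenvalue_norm_le /(le_trans (ler_norm a)) /le_trans; apply.
rewrite /Ustar_l1norm mulr_sumr; apply: ler_sum => b _.
rewrite mulr_sumr; apply: ler_sum => c _; exact: Ustar_entry_le.
Qed.

End Ustar.

Theorem lemma2p10 (R : realType) (N p : nat) (HN : (1 < N)%N) (Hp : (0 < p)%N)
  (k : R) :
  exists C : R, forall g : 'M[R]_(N, p) -> 'rV[R]_N,
    ae_Omega (fun x => eig_le (- Lstar_of_div g x) k) ->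
    ae_Omega (fun x => eig_le (Lstar_of_div g x) C).
Proof.
set K := Num.max k 0.
have K0 : 0 <= K by rewrite le_max lexx orbT.
exists (5 * K * Ustar_l1norm R N p) => g; apply: ae_Omega_mono => x hk.
apply/eig_le_Ustar/(Ustar_coord_bounded HN Hp K0) => a /hk /le_trans; apply.
by rewrite le_max lexx.
Qed.
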